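(* Let $\mathcal F_0=\{6\times1,\,1\times6,\,3\times3\}$ (closed axis-parallel rectangles). Let $\Lambda$ be an $\mathcal F_0$-piercing lattice with vector basis $u=[a,b]$, $v=[c,-d]$, where $a,b,c,d\ge0$ and $b>0$, and suppose $\Lambda$ has minimum density $1/A$ among all $\mathcal F_0$-piercing lattices, where $A=ad+bc$. Then $A\le\frac{31}{6}$.
   Context: A point set is $\mathcal F_0$-piercing if every translate of every rectangle in $\mathcal F_0$ contains one of its points. A lattice $\{iu+jv:i,j\in\mathbb Z\}$ has density $1/|\det[u,v]|$. *)

From Stdlib Require Import Reals List.
Open Scope R_scope.

Definition in_lattice (u1 u2 v1 v2 x y : R) : Prop :=
  exists i j : Z, x = IZR i * u1 + IZR j * v1 /\ y = IZR i * u2 + IZR j * v2.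

Definition det2 (u1 u2 v1 v2 : R) : R := u1 * v2 - u2 * v1.

Definition is_lattice_basis (u1 u2 v1 v2 : R) : Prop := det2 u1 u2 v1 v2 <> 0.

Definition lattice_density (u1 u2 v1 v2 : R) : R := 1 / Rabs (det2 u1 u2 v1 v2).

(* A rectangle of width w and height h, given as the pair (w, h);
   its translates are the closed boxes [x0, x0 + w] x [y0, y0 + h]. *)
Definition F0 : list (R * R) := (6, 1) :: (1, 6) :: (3, 3) :: nil.

Definition F0_piercing (u1 u2 v1 v2 : R) : Prop :=
  forall r, In r F0 -> forall x0 y0 : R,
    exists x y : R, in_lattice u1 u2 v1 v2 x y /\
      x0 <= x <= x0 + fst r /\ y0 <= y <= y0 + snd r.

(* A lattice that pierces every translate of a w x h box contains two independent
   points in the strip 0 < x <= w, one on or above and one on or below the x-axis,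
   at most h apart vertically: take the highest such point with y <= 0 and the
   lowest one above it.  Their determinant is at most w h in absolute value, so
   when the covolume D exceeds w h / 2 they form a basis of the lattice.  If
   D > 31/6, this applies to the 6 x 1, 1 x 6 and 3 x 3 boxes at once.  Writing
   the last two pairs in the basis given by the first, Cramer's rule leaves
   finitely many unimodular integer configurations, each of which contradicts the
   real constraints.  The bound thus holds for every F0-piercing lattice. *)

From Stdlib Require Import Reals List Lra Psatz ZArith Lia Classical.
Open Scope R_scope.

Definition Zinterval (lo hi : Z) : list Z :=
  map (fun i => lo + Z.of_nat i)%Z (seq 0 (Z.to_nat (hi - lo + 1))).

Lemma in_Zinterval (lo hi k : Z) : (lo <= k <= hi)%Z -> In k (Zinterval lo hi).
Proof.
  intros Hk. apply in_map_iff. exists (Z.to_nat (k - lo)). split.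
  - rewrite Z2Nat.id; lia.
  - apply in_seq. lia.
Qed.

Lemma Z_range_of_IZR (lo hi k : Z) :
  IZR lo - 1 < IZR k -> IZR k < IZR hi + 1 -> (lo <= k <= hi)%Z.
Proof.
  rewrite <- minus_IZR, <- plus_IZR. intros Hlo%lt_IZR Hhi%lt_IZR. lia.
Qed.

Lemma Z_eq_1_of_small_multiple (k : Z) (D : R) :
  0 < IZR k * D -> IZR k * D < 2 * D -> k = 1%Z.
Proof.
  intros Hpos Hlt.
  assert (HD : 0 < D) by nra.
  assert (Hk0 : (0 < k)%Z) by (apply lt_IZR; nra).
  assert (Hk2 : (k < 2)%Z) by (apply lt_IZR; nra).
  lia.
Qed.

Lemma exists_pos_below_list (l : list R) :
  exists e, 0 < e /\ forall z, In z l -> 0 < z -> e < z.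
Proof.
  induction l as [|z l [e [He Hl]]].
  - exists 1. split; [lra | intros z []].
  - destruct (Rlt_dec 0 z) as [Hz|Hz].
    + exists (Rmin e (z / 2)). split; [apply Rmin_glb_lt; lra|].
      intros w [<-|Hw] Hw0.
      * pose proof (Rmin_r e (z / 2)). lra.
      * pose proof (Rmin_l e (z / 2)). specialize (Hl w Hw Hw0). lra.
    + exists e. split; [exact He|]. intros w [<-|Hw] Hw0; [lra | auto].
Qed.

Lemma exists_max_in_list {A : Type} (P : A -> Prop) (f : A -> R) (l : list A) :
  (exists a, In a l /\ P a) ->
  exists a, In a l /\ P a /\ forall b, In b l -> P b -> f b <= f a.
Proof.
  induction l as [|a l IH]; intros [a0 [Ha0 HPa0]]; [destruct Ha0|].
  destruct (classic (exists b, In b l /\ P b)) as [Hl|Hl].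
  - destruct (IH Hl) as [m [Hm [HPm Hmax]]].
    destruct (classic (P a /\ f m < f a)) as [[HPa Ham]|Ham].
    + exists a. split; [left; reflexivity|]. split; [exact HPa|].
      intros b [<-|Hb] HPb; [lra|]. specialize (Hmax b Hb HPb). lra.
    + exists m. split; [right; exact Hm|]. split; [exact HPm|].
      intros b [<-|Hb] HPb; [|exact (Hmax b Hb HPb)].
      apply Rnot_lt_le. intro. apply Ham. auto.
  - assert (a0 = a) as <-.
    { destruct Ha0 as [|Ha0]; [auto|]. exfalso. apply Hl. eauto. }
    exists a0. split; [left; reflexivity|]. split; [exact HPa0|].
    intros b [<-|Hb] HPb; [lra|]. exfalso. apply Hl. eauto.
Qed.

Lemma det2_swap (x1 y1 x2 y2 : R) : det2 y1 x1 y2 x2 = - det2 x1 y1 x2 y2.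
Proof. unfold det2. ring. Qed.

Lemma det2_lattice_points (u1 u2 v1 v2 : R) (i1 j1 i2 j2 : Z) :
  det2 (IZR i1 * u1 + IZR j1 * v1) (IZR i1 * u2 + IZR j1 * v2)
       (IZR i2 * u1 + IZR j2 * v1) (IZR i2 * u2 + IZR j2 * v2)
  = IZR (i1 * j2 - j1 * i2) * det2 u1 u2 v1 v2.
Proof. unfold det2. rewrite minus_IZR, !mult_IZR. ring. Qed.

Lemma lattice_coeffs_cramer (u1 u2 v1 v2 : R) (i j : Z) :
  IZR i * det2 u1 u2 v1 v2
    = (IZR i * u1 + IZR j * v1) * v2 - (IZR i * u2 + IZR j * v2) * v1 /\
  IZR j * det2 u1 u2 v1 v2
    = u1 * (IZR i * u2 + IZR j * v2) - u2 * (IZR i * u1 + IZR j * v1).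
Proof. unfold det2. split; ring. Qed.

Lemma in_lattice_swap (u1 u2 v1 v2 x y : R) :
  in_lattice u2 u1 v2 v1 y x <-> in_lattice u1 u2 v1 v2 x y.
Proof. split; intros [i [j [H1 H2]]]; exists i, j; split; assumption. Qed.

Lemma Rabs_cross_le (x y b c r : R) :
  Rabs x <= r -> Rabs y <= r -> Rabs (x * b - y * c) <= r * (Rabs b + Rabs c).
Proof.
  intros Hx Hy. unfold Rminus.
  eapply Rle_trans; [apply Rabs_triang|]. rewrite Rabs_Ropp, !Rabs_mult.
  pose proof (Rabs_pos b); pose proof (Rabs_pos c).
  pose proof (Rabs_pos x); pose proof (Rabs_pos y). nra.
Qed.

Lemma lattice_points_in_box_listed (u1 u2 v1 v2 r : R) :
  det2 u1 u2 v1 v2 <> 0 ->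
  exists pts : list (R * R), forall x y, in_lattice u1 u2 v1 v2 x y ->
    Rabs x <= r -> Rabs y <= r -> In (x, y) pts.
Proof.
  intros Hdet.
  set (B := r * (Rabs u1 + Rabs u2 + Rabs v1 + Rabs v2) / Rabs (det2 u1 u2 v1 v2)).
  destruct (INR_archimed 1 B ltac:(lra)) as [N HN]. rewrite Rmult_1_r in HN.
  set (zs := Zinterval (- Z.of_nat N) (Z.of_nat N)).
  exists (map (fun ij => (IZR (fst ij) * u1 + IZR (snd ij) * v1,
                         IZR (fst ij) * u2 + IZR (snd ij) * v2)) (list_prod zs zs)).
  intros x y [i [j [Hx Hy]]] Hxr Hyr.
  assert (Hd : 0 < Rabs (det2 u1 u2 v1 v2)) by (apply Rabs_pos_lt; exact Hdet).
  assert (coeff_in_range : forall k : Z, Rabs (IZR k) * Rabs (det2 u1 u2 v1 v2)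
            <= r * (Rabs u1 + Rabs u2 + Rabs v1 + Rabs v2) -> In k zs).
  { intros k Hk. apply in_Zinterval.
    assert (Hkb : Rabs (IZR k) < IZR (Z.of_nat N)).
    { rewrite <- INR_IZR_INZ. apply Rle_lt_trans with B; [|exact HN].
      unfold B. apply Rmult_le_reg_r with (Rabs (det2 u1 u2 v1 v2)); [exact Hd|].
      unfold Rdiv. rewrite Rmult_assoc, Rinv_l, Rmult_1_r by lra. exact Hk. }
    rewrite Rabs_Zabs in Hkb. apply lt_IZR in Hkb. lia. }
  assert (Hr : 0 <= r) by (pose proof (Rabs_pos x); lra).
  destruct (lattice_coeffs_cramer u1 u2 v1 v2 i j) as [Ei Ej].
  rewrite <- Hx, <- Hy in Ei, Ej.
  apply in_map_iff. exists (i, j). split; [simpl; congruence|].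
  apply in_prod; apply coeff_in_range; rewrite <- Rabs_mult.
  - rewrite Ei. pose proof (Rabs_cross_le x y v2 v1 r Hxr Hyr).
    pose proof (Rabs_pos u1); pose proof (Rabs_pos u2). nra.
  - replace (u1 * y - u2 * x) with (y * u1 - x * u2) in Ej by ring. rewrite Ej.
    pose proof (Rabs_cross_le y x u1 u2 r Hyr Hxr).
    pose proof (Rabs_pos v1); pose proof (Rabs_pos v2). nra.
Qed.

Lemma small_det_pair_generates (u1 u2 v1 v2 px py qx qy : R) :
  in_lattice u1 u2 v1 v2 px py -> in_lattice u1 u2 v1 v2 qx qy ->
  0 < Rabs (det2 px py qx qy) < 2 * Rabs (det2 u1 u2 v1 v2) ->
  Rabs (det2 px py qx qy) = Rabs (det2 u1 u2 v1 v2) /\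
  forall x y, in_lattice u1 u2 v1 v2 x y -> in_lattice px py qx qy x y.
Proof.
  intros [i1 [j1 [-> ->]]] [i2 [j2 [-> ->]]].
  rewrite det2_lattice_points, Rabs_mult, Rabs_Zabs.
  set (k := (i1 * j2 - j1 * i2)%Z). intros [Hpos Hlt].
  assert (Hk : Z.abs k = 1%Z)
    by (apply (Z_eq_1_of_small_multiple _ (Rabs (det2 u1 u2 v1 v2))); lra).
  rewrite Hk, Rmult_1_l. split; [reflexivity|].
  assert (Hkk : IZR k * IZR k = 1) by (rewrite <- mult_IZR; f_equal; lia).
  intros x y [i [j [-> ->]]].
  exists (k * (i * j2 - j * i2))%Z, (k * (j * i1 - i * j1))%Z.
  (* The inverse of the change of basis matrix is k times its adjugate, as k = k^-1. *)
  split; [transitivity (IZR k * IZR k * (IZR i * u1 + IZR j * v1))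
         | transitivity (IZR k * IZR k * (IZR i * u2 + IZR j * v2))];
    try (rewrite Hkk; ring); unfold k; rewrite !mult_IZR, !minus_IZR, !mult_IZR; ring.
Qed.

Definition pierces_boxes (u1 u2 v1 v2 w h : R) : Prop :=
  forall x0 y0, exists x y, in_lattice u1 u2 v1 v2 x y /\
    x0 <= x <= x0 + w /\ y0 <= y <= y0 + h.

Definition straddling (w h x1 y1 x2 y2 : R) : Prop :=
  0 < x1 <= w /\ 0 < x2 <= w /\ 0 <= y1 /\ y2 <= 0 /\ y1 - y2 <= h /\
  det2 x1 y1 x2 y2 < 0.

Lemma straddling_det2_ge (w h x1 y1 x2 y2 : R) :
  straddling w h x1 y1 x2 y2 -> - (w * h) <= det2 x1 y1 x2 y2.
Proof. unfold straddling, det2. intros (Hx1 & Hx2 & Hy1 & Hy2 & Hgap & _). nra. Qed.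

Lemma pierces_half_open_strip (u1 u2 v1 v2 w h : R) :
  det2 u1 u2 v1 v2 <> 0 -> pierces_boxes u1 u2 v1 v2 w h ->
  forall y0, exists x y, in_lattice u1 u2 v1 v2 x y /\ 0 < x <= w /\ y0 <= y <= y0 + h.
Proof.
  intros Hdet Hpierce y0.
  destruct (lattice_points_in_box_listed u1 u2 v1 v2 (w + Rabs y0 + h + 1) Hdet)
    as [pts Hpts].
  pose proof (Rle_abs y0). pose proof (Rle_abs (- y0)). rewrite Rabs_Ropp in *.
  destruct (exists_pos_below_list (map (fun p => fst p - w) pts)) as [e0 [He0 Hbelow]].
  pose proof (Rmin_l e0 1). pose proof (Rmin_r e0 1).
  assert (He : 0 < Rmin e0 1) by (apply Rmin_glb_lt; lra).
  set (e := Rmin e0 1) in *.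
  (* The box is pierced right of x = e > 0, and not beyond w since e is below
     every positive x - w. *)
  destruct (Hpierce e y0) as [x [y [Hxy [Hx Hy]]]].
  assert (Hin : In (x, y) pts).
  { apply Hpts; [exact Hxy | apply Rabs_le; split; lra ..]. }
  exists x, y. repeat split; try assumption; try lra.
  apply Rnot_lt_le. intros HxW.
  assert (e0 < x - w); [|lra].
  apply Hbelow; [|lra]. apply in_map_iff. exists (x, y). auto.
Qed.

Lemma straddling_pair_of_pierces (u1 u2 v1 v2 w h : R) :
  det2 u1 u2 v1 v2 <> 0 -> pierces_boxes u1 u2 v1 v2 w h ->
  exists x1 y1 x2 y2, in_lattice u1 u2 v1 v2 x1 y1 /\ in_lattice u1 u2 v1 v2 x2 y2 /\
    straddling w h x1 y1 x2 y2.
Proof.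
  intros Hdet Hpierce.
  assert (Hwh : 0 <= w /\ 0 <= h) by (destruct (Hpierce 0 0) as (x & y & _ & Hx & Hy); lra).
  destruct (lattice_points_in_box_listed u1 u2 v1 v2 (w + h + 1) Hdet) as [pts Hpts].
  assert (strip_point : forall y0, - h - 1 <= y0 <= 1 -> exists x y,
            in_lattice u1 u2 v1 v2 x y /\ In (x, y) pts /\ 0 < x <= w /\ y0 <= y <= y0 + h).
  { intros y0 Hy0.
    destruct (pierces_half_open_strip _ _ _ _ _ _ Hdet Hpierce y0)
      as [x [y [Hxy [Hx Hy]]]].
    exists x, y. split; [exact Hxy|]. split; [|split; assumption].
    apply Hpts; [exact Hxy | apply Rabs_le; split; lra ..]. }
  destruct (exists_max_in_list
              (fun p => (in_lattice u1 u2 v1 v2 (fst p) (snd p) /\ 0 < fst p <= w) /\ snd p <= 0)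
              snd pts)
    as [[x2 y2] [_ [[[Hl2 Hx2] Hy2] Hmax]]].
  { destruct (strip_point (- h) ltac:(lra)) as [x [y [Hxy [Hin [Hx Hy]]]]].
    exists (x, y). cbn. repeat split; auto; lra. }
  cbn in *.
  assert (Hy2h : - h <= y2).
  { destruct (strip_point (- h) ltac:(lra)) as [x [y [Hxy [Hin [Hx Hy]]]]].
    assert (y <= y2) by (apply (Hmax (x, y)); [| cbn; repeat split]; auto; lra). lra. }
  destruct (exists_max_in_list
              (fun p => (in_lattice u1 u2 v1 v2 (fst p) (snd p) /\ 0 < fst p <= w) /\ y2 < snd p)
              (fun p => - snd p) pts)
    as [[x1 y1] [Hin1 [[[Hl1 Hx1] Hy1] Hmin]]].
  { destruct (strip_point (y2 + 1) ltac:(lra)) as [x [y [Hxy [Hin [Hx Hy]]]]].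
    exists (x, y). cbn. repeat split; auto; lra. }
  cbn in *.
  assert (Hy1pos : 0 < y1).
  { apply Rnot_le_lt. intros Hy1'.
    assert (y1 <= y2) by (apply (Hmax (x1, y1)); [| cbn; repeat split]; auto; lra). lra. }
  (* Every window starting just above y2 contains a strip point, which lies at or
     above y1. *)
  assert (Hgap : y1 <= y2 + h).
  { apply Rle_plus_epsilon. intros d Hd.
    pose proof (Rmin_l d 1). pose proof (Rmin_r d 1).
    assert (Hd' : 0 < Rmin d 1) by (apply Rmin_glb_lt; lra).
    destruct (strip_point (y2 + Rmin d 1) ltac:(lra)) as [x [y [Hxy [Hin [Hx Hy]]]]].
    assert (- y <= - y1) by (apply (Hmin (x, y)); [| cbn; repeat split]; auto; lra). lra. }
  exists x1, y1, x2, y2. repeat split; try assumption; try lra.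
  unfold det2. nra.
Qed.

Ltac case_Z k :=
  match goal with
  | Hk : (?lo <= k <= ?hi)%Z |- _ =>
      let Hin := fresh "Hin" in
      pose proof (in_Zinterval lo hi k Hk) as Hin; clear Hk; compute in Hin;
      repeat (destruct Hin as [Hin | Hin]; [subst k | ]);
      try contradiction
  end.

Lemma no_dense_F0_configuration (x1 y1 x2 y2 : R) :
  straddling 6 1 x1 y1 x2 y2 -> 31 / 6 < - det2 x1 y1 x2 y2 ->
  forall X1 Y1 X2 Y2 S1 T1 S2 T2 : R,
  in_lattice x1 y1 x2 y2 X1 Y1 -> in_lattice x1 y1 x2 y2 X2 Y2 ->
  straddling 6 1 Y1 X1 Y2 X2 ->
  in_lattice x1 y1 x2 y2 S1 T1 -> in_lattice x1 y1 x2 y2 S2 T2 ->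
  straddling 3 3 S1 T1 S2 T2 -> False.
Proof.
  intros Hhor HD X1 Y1 X2 Y2 S1 T1 S2 T2 HV1 HV2 Hver HS1 HS2 Hsq.
  pose proof (straddling_det2_ge _ _ _ _ _ _ Hver) as Hver_ge.
  pose proof (straddling_det2_ge _ _ _ _ _ _ Hsq) as Hsq_ge.
  destruct HV1 as [m1 [n1 [-> ->]]], HV2 as [m2 [n2 [-> ->]]].
  destruct HS1 as [a1 [b1 [-> ->]]], HS2 as [a2 [b2 [-> ->]]].
  rewrite det2_swap, det2_lattice_points in Hver_ge.
  rewrite det2_lattice_points in Hsq_ge.
  destruct Hver as (HY1 & HY2 & HX1 & HX2 & HXgap & Hver_lt).
  destruct Hsq as (HS1 & HS2 & HT1 & HT2 & HTgap & Hsq_lt).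
  rewrite det2_swap, det2_lattice_points in Hver_lt.
  rewrite det2_lattice_points in Hsq_lt.
  assert (Hver_unit : (m1 * n2 - n1 * m2 = -1)%Z).
  { assert (- (m1 * n2 - n1 * m2) = 1)%Z; [|lia].
    apply (Z_eq_1_of_small_multiple _ (- det2 x1 y1 x2 y2)); rewrite opp_IZR; lra. }
  assert (Hsq_unit : (a1 * b2 - b1 * a2 = 1)%Z).
  { apply (Z_eq_1_of_small_multiple _ (- det2 x1 y1 x2 y2)); lra. }
  clear Hver_ge Hsq_ge Hver_lt Hsq_lt.
  destruct Hhor as (Hx1 & Hx2 & Hy1 & Hy2 & Hgap & _).
  destruct (lattice_coeffs_cramer x1 y1 x2 y2 m1 n1) as [Em1 En1].
  destruct (lattice_coeffs_cramer x1 y1 x2 y2 m2 n2) as [Em2 En2].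
  destruct (lattice_coeffs_cramer x1 y1 x2 y2 a1 b1) as [Ea1 Eb1].
  destruct (lattice_coeffs_cramer x1 y1 x2 y2 a2 b2) as [Ea2 Eb2].
  (* Cramer's rule and the lower bound on the covolume confine the coefficients. *)
  assert (Bm1 : (1 <= m1 <= 7)%Z) by (apply Z_range_of_IZR; nra).
  assert (Bn1 : (-6 <= n1 <= 0)%Z) by (apply Z_range_of_IZR; nra).
  assert (Bm2 : (0 <= m2 <= 6)%Z) by (apply Z_range_of_IZR; nra).
  assert (Bn2 : (-7 <= n2 <= -1)%Z) by (apply Z_range_of_IZR; nra).
  assert (Ba1 : (0 <= a1 <= 4)%Z) by (apply Z_range_of_IZR; nra).
  assert (Bb1 : (-3 <= b1 <= 0)%Z) by (apply Z_range_of_IZR; nra).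
  assert (Ba2 : (-3 <= a2 <= 0)%Z) by (apply Z_range_of_IZR; nra).
  assert (Bb2 : (0 <= b2 <= 4)%Z) by (apply Z_range_of_IZR; nra).
  clear Em1 En1 Em2 En2 Ea1 Eb1 Ea2 Eb2.
  unfold det2 in HD.
  (* Almost every unimodular choice of the vertical pair is already contradictory;
     the few survivors are refuted once the square pair is enumerated too. *)
  case_Z m1; case_Z n1; try lia; case_Z m2; try lia; case_Z n2; try lia; try nra;
  case_Z a1; case_Z b1; try lia; try nra;
  case_Z a2; try lia; case_Z b2; try lia; nra.
Qed.

Lemma F0_piercing_pierces (u1 u2 v1 v2 : R) :
  F0_piercing u1 u2 v1 v2 ->
  pierces_boxes u1 u2 v1 v2 6 1 /\ pierces_boxes u2 u1 v2 v1 6 1 /\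
  pierces_boxes u1 u2 v1 v2 3 3.
Proof.
  intros Hp. split; [|split]; intros x0 y0.
  - apply (Hp (6, 1)). simpl; auto.
  - destruct (Hp (1, 6) ltac:(simpl; auto) y0 x0) as [x [y [Hxy [Hxb Hyb]]]].
    exists y, x. split; [apply in_lattice_swap; exact Hxy | simpl in *; lra].
  - apply (Hp (3, 3)). simpl; auto.
Qed.

Lemma F0_piercing_det2_le (u1 u2 v1 v2 : R) :
  is_lattice_basis u1 u2 v1 v2 -> F0_piercing u1 u2 v1 v2 ->
  Rabs (det2 u1 u2 v1 v2) <= 31 / 6.
Proof.
  intros Hbasis Hpierce. apply Rnot_lt_le. intros Hlarge.
  destruct (F0_piercing_pierces _ _ _ _ Hpierce) as (Hhor & Hver & Hsq).
  assert (Hbasis' : det2 u2 u1 v2 v1 <> 0)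
    by (rewrite det2_swap; unfold is_lattice_basis in Hbasis; lra).
  destruct (straddling_pair_of_pierces _ _ _ _ 6 1 Hbasis Hhor)
    as (x1 & y1 & x2 & y2 & Hp & Hq & Hpq).
  pose proof (straddling_det2_ge _ _ _ _ _ _ Hpq) as Hpq_ge.
  assert (Hpq_neg : det2 x1 y1 x2 y2 < 0) by apply Hpq.
  destruct (small_det_pair_generates _ _ _ _ _ _ _ _ Hp Hq) as [Hdet Hgen].
  { rewrite Rabs_left by exact Hpq_neg. lra. }
  destruct (straddling_pair_of_pierces _ _ _ _ 6 1 Hbasis' Hver)
    as (X1 & Y1 & X2 & Y2 & HV1 & HV2 & HV).
  destruct (straddling_pair_of_pierces _ _ _ _ 3 3 Hbasis Hsq)
    as (S1 & T1 & S2 & T2 & HS1 & HS2 & HS).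
  assert (HD : 31 / 6 < - det2 x1 y1 x2 y2)
    by (rewrite Rabs_left in Hdet by exact Hpq_neg; lra).
  apply (no_dense_F0_configuration x1 y1 x2 y2 Hpq HD Y1 X1 Y2 X2 S1 T1 S2 T2);
    try apply Hgen; first [assumption | apply in_lattice_swap; assumption].
Qed.

Theorem lemma13 (a b c d : R) :
  0 <= a -> 0 <= b -> 0 <= c -> 0 <= d -> 0 < b ->
  is_lattice_basis a b c (- d) ->
  F0_piercing a b c (- d) ->
  (forall u1 u2 v1 v2 : R, is_lattice_basis u1 u2 v1 v2 ->
     F0_piercing u1 u2 v1 v2 ->
     lattice_density a b c (- d) <= lattice_density u1 u2 v1 v2) ->
  a * d + b * c <= 31 / 6.
Proof.
  intros _ _ _ _ _ Hbasis Hpierce _.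
  pose proof (F0_piercing_det2_le _ _ _ _ Hbasis Hpierce) as Hle.
  pose proof (Rle_abs (- det2 a b c (- d))) as Habs.
  rewrite Rabs_Ropp in Habs. unfold det2 in *. lra.
Qed.
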